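(* Let $(E,\rho)$ be a complete partial $b_v(s)$ metric space and let $S:E\to E$ satisfy $\rho(Su,Sw)\le\lambda\max\{\rho(u,w),\rho(u,Su),\rho(w,Sw)\}$ for all $u,w\in E$, where $\lambda\in[0,\tfrac1s)$. Then $S$ has a unique fixed point $b\in E$, and $\rho(b,b)=0$.
   Context: Let $E$ be a nonempty set and $v\in\mathbb{N}$. $(E,\rho)$, with $\rho:E\times E\to[0,\infty)$, is a partial $b_v(s)$ metric space if there is a real $s\ge1$ such that for all $u,w,z_1,\dots,z_v\in E$: (1) $u=w$ iff $\rho(u,u)=\rho(u,w)=\rho(w,w)$; (2) $\rho(u,u)\le\rho(u,w)$; (3) $\rho(u,w)=\rho(w,u)$; (4) $\rho(u,w)\le s[\rho(u,z_1)+\rho(z_1,z_2)+\dots+\rho(z_{v-1},z_v)+\rho(z_v,w)]-\sum_{i=1}^v\rho(z_i,z_i)$. A sequence $\{u_n\}$ in $E$ converges to $u\in E$ if $\lim_{n\to\infty}\rho(u_n,u)=\rho(u,u)$; it is Cauchy if $\lim_{n,m\to\infty}\rho(u_n,u_m)$ exists and is finite. $(E,\rho)$ is complete if for every Cauchy sequence $\{u_n\}$ there is $u\in E$ with $\lim_{n,m\to\infty}\rho(u_n,u_m)=\lim_{n\to\infty}\rho(u_n,u)=\rho(u,u)$. *)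

From Stdlib Require Import Reals Lra.
Open Scope R_scope.

(* Chain sum  rho(u,z 1) + rho(z 1,z 2) + ... + rho(z (v-1), z v) + rho(z v, w)
   for the points z 1, ..., z v (z 0 is unused). *)
Fixpoint inner_sum {E : Type} (rho : E -> E -> R) (z : nat -> E) (k : nat) : R :=
  match k with
  | O => 0
  | S k' => inner_sum rho z k' + rho (z k) (z (S k))
  end.

Definition chain_sum {E : Type} (rho : E -> E -> R) (v : nat) (u w : E)
  (z : nat -> E) : R :=
  rho u (z 1%nat) + inner_sum rho z (v - 1)%nat + rho (z v) w.

Definition self_sum {E : Type} (rho : E -> E -> R) (v : nat) (z : nat -> E) : R :=
  sum_f_R0 (fun i => rho (z (S i)) (z (S i))) (v - 1)%nat.

Definition partial_bv_metric {E : Type} (v : nat) (s : R) (rho : E -> E -> R) : Prop :=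
  (1 <= v)%nat /\ 1 <= s /\
  (forall u w, 0 <= rho u w) /\
  (forall u w, u = w <-> (rho u u = rho u w /\ rho u w = rho w w)) /\
  (forall u w, rho u u <= rho u w) /\
  (forall u w, rho u w = rho w u) /\
  (forall u w (z : nat -> E),
      rho u w <= s * chain_sum rho v u w z - self_sum rho v z).

Definition pconverges {E : Type} (rho : E -> E -> R) (un : nat -> E) (x : E) : Prop :=
  Un_cv (fun n => rho (un n) x) (rho x x).

Definition double_lim {E : Type} (rho : E -> E -> R) (un : nat -> E) (L : R) : Prop :=
  forall eps, eps > 0 -> exists N : nat, forall n m : nat,
    (n >= N)%nat -> (m >= N)%nat -> Rabs (rho (un n) (un m) - L) < eps.

Definition pCauchy {E : Type} (rho : E -> E -> R) (un : nat -> E) : Prop :=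
  exists L : R, double_lim rho un L.

Definition pcomplete {E : Type} (rho : E -> E -> R) : Prop :=
  forall un : nat -> E, pCauchy rho un ->
    exists x : E, double_lim rho un (rho x x) /\ pconverges rho un x.

From Stdlib Require Import Reals Lra Lia.
Open Scope R_scope.

(* Taking all intermediate points of the b_v(s) inequality equal to one point y gives
   rho(u,w) <= s (rho(u,y) + (v-1) rho(y,y) + rho(y,w)).  Along the Picard iterates,
   rho(x_n, x_(n+1)) <= lambda^n rho(x_0, x_1), and routing rho(x_n, x_(n+k)) through x_(n+1)
   shows by induction on k that rho(x_n, x_(n+k)) <= K lambda^n, where K solves
   K = s v rho(x_0, x_1) + s lambda K (this is where s lambda < 1 is needed).  So (x_n) is
   Cauchy with double limit 0, and completeness yields b with rho(b,b) = 0 and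
   rho(x_n, b) -> 0.  Routing rho(b, Sb) through x_(n+1) gives rho(b, Sb) <= s lambda rho(b, Sb)
   in the limit, hence Sb = b.  Two fixed points c, b satisfy rho(c,b) <= lambda rho(c,b). *)

Lemma inner_sum_const {E : Type} (rho : E -> E -> R) (y : E) (k : nat) :
  inner_sum rho (fun _ => y) k = INR k * rho y y.
Proof.
  induction k as [|k IH]; cbn [inner_sum].
  - simpl; ring.
  - rewrite IH, S_INR; ring.
Qed.

Lemma double_lim_unique {E : Type} (rho : E -> E -> R) (un : nat -> E) (L L' : R) :
  double_lim rho un L -> double_lim rho un L' -> L = L'.
Proof.
  intros HL HL'.
  destruct (Req_dec L L') as [|Hne]; [assumption|exfalso].
  set (e := Rabs (L - L') / 2).
  assert (He : e > 0) by (unfold e; pose proof (Rabs_pos_lt (L - L')); lra).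
  destruct (HL e He) as [N1 H1]; destruct (HL' e He) as [N2 H2].
  set (n := max N1 N2).
  specialize (H1 n n ltac:(lia) ltac:(lia)); specialize (H2 n n ltac:(lia) ltac:(lia)).
  pose proof (Rabs_triang (rho (un n) (un n) - L') (L - rho (un n) (un n))) as Htri.
  rewrite Rabs_minus_sym in H1.
  replace (rho (un n) (un n) - L' + (L - rho (un n) (un n))) with (L - L') in Htri by ring.
  unfold e in *; lra.
Qed.

Lemma nonpos_of_le_mul_eps (t C : R) :
  0 <= C -> (forall e, 0 < e -> t <= C * e) -> t <= 0.
Proof.
  intros HC Ht. apply Rle_plus_epsilon. intros eps Heps.
  assert (Hq : 0 < eps / (C + 1)) by (apply Rdiv_lt_0_compat; lra).
  assert (HCe : C * (eps / (C + 1)) <= eps).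
  { apply Rmult_le_reg_r with (C + 1); [lra|].
    replace (C * (eps / (C + 1)) * (C + 1)) with (C * eps) by (field; lra). nra. }
  specialize (Ht _ Hq). lra.
Qed.

Lemma scaled_pow_eventually_lt (lambda K : R) :
  0 <= lambda < 1 -> 0 <= K ->
  forall eps, 0 < eps -> exists N, forall n, (n >= N)%nat -> K * lambda ^ n < eps.
Proof.
  intros Hl HK eps Heps.
  destruct (pow_lt_1_zero lambda ltac:(rewrite Rabs_right; lra) (eps / (K + 1)))
    as [N HN]; [apply Rdiv_lt_0_compat; lra|].
  exists N. intros n Hn. specialize (HN n Hn).
  pose proof (pow_le lambda n (proj1 Hl)) as Hpow.
  rewrite Rabs_right in HN by lra.
  apply Rle_lt_trans with ((K + 1) * lambda ^ n); [nra|].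
  apply Rmult_lt_reg_r with (/ (K + 1)); [apply Rinv_0_lt_compat; lra|].
  replace ((K + 1) * lambda ^ n * / (K + 1)) with (lambda ^ n) by (field; lra).
  exact HN.
Qed.

Section PartialBvMetric.

Variables (E : Type) (v : nat) (s : R) (rho : E -> E -> R).
Hypothesis Hrho : partial_bv_metric v s rho.

Lemma pbv_s_ge1 : 1 <= s.
Proof. apply Hrho. Qed.

Lemma rho_ge0 u w : 0 <= rho u w.
Proof. apply Hrho. Qed.

Lemma rhoC u w : rho u w = rho w u.
Proof. apply Hrho. Qed.

Lemma rho_self_le u w : rho u u <= rho u w.
Proof. apply Hrho. Qed.

Lemma rho_self_le_r u w : rho w w <= rho u w.
Proof. rewrite (rhoC u w); apply rho_self_le. Qed.

Lemma eq_of_rho_eq0 u w : rho u w = 0 -> u = w.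
Proof.
  intro H0. destruct Hrho as (_ & _ & _ & Heq & _); apply Heq.
  pose proof (rho_self_le u w); pose proof (rho_self_le_r u w).
  pose proof (rho_ge0 u u); pose proof (rho_ge0 w w).
  lra.
Qed.

Lemma rho_triangle_via u y w :
  rho u w <= s * (rho u y + INR (v - 1) * rho y y + rho y w).
Proof.
  destruct Hrho as (_ & _ & _ & _ & _ & _ & Hchain).
  pose proof (Hchain u w (fun _ => y)) as H.
  unfold chain_sum in H; rewrite inner_sum_const in H.
  assert (0 <= self_sum rho v (fun _ => y))
    by (apply cond_pos_sum; intro; apply rho_ge0).
  lra.
Qed.

Variables (f : E -> E) (lambda : R).
Hypothesis Hl : 0 <= lambda.
Hypothesis Hsl : s * lambda < 1.
Hypothesis Hf : forall u w,
  rho (f u) (f w) <= lambda * Rmax (rho u w) (Rmax (rho u (f u)) (rho w (f w))).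

Lemma lambda_lt1 : lambda < 1.
Proof. pose proof pbv_s_ge1; nra. Qed.

Lemma rho_step_contract u : rho (f u) (f (f u)) <= lambda * rho u (f u).
Proof.
  pose proof (Hf u (f u)) as H.
  pose proof (rho_ge0 u (f u)); pose proof (rho_ge0 (f u) (f (f u))).
  pose proof lambda_lt1.
  destruct (Rle_dec (rho (f u) (f (f u))) (rho u (f u))) as [Hle|Hgt].
  - rewrite (Rmax_left _ _ Hle), Rmax_left in H by lra. exact H.
  - apply Rnot_le_lt in Hgt.
    rewrite (Rmax_right _ _ (Rlt_le _ _ Hgt)), Rmax_right in H by lra.
    assert (rho (f u) (f (f u)) <= 0) by (apply Rmult_le_reg_l with (1 - lambda); lra).
    pose proof (Rmult_le_pos _ _ Hl (rho_ge0 u (f u))). lra.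
Qed.

Lemma fixed_point_unique b c : f b = b -> f c = c -> c = b.
Proof.
  intros Hb Hc. apply eq_of_rho_eq0.
  pose proof (Hf c b) as H; rewrite Hc, Hb in H.
  rewrite Rmax_left in H
    by (apply Rmax_lub; [apply rho_self_le | apply rho_self_le_r]).
  pose proof (rho_ge0 c b); pose proof lambda_lt1.
  assert (0 <= (1 - lambda) * rho c b) by (apply Rmult_le_pos; lra).
  nra.
Qed.

Definition picard (x0 : E) (n : nat) : E := Nat.iter n f x0.

Variable x0 : E.

Let x := picard x0.
Let d0 := rho x0 (f x0).
Let V := INR (v - 1).

Lemma picard_step_pow n : rho (x n) (x (S n)) <= lambda ^ n * d0.
Proof.
  induction n as [|n IH]; [simpl; unfold d0; lra|].
  apply Rle_trans with (1 := rho_step_contract (x n)).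
  rewrite <- tech_pow_Rmult, Rmult_assoc.
  apply Rmult_le_compat_l; [exact Hl | exact IH].
Qed.

Let K := s * (1 + V) * d0 / (1 - s * lambda).

Lemma K_fixed_eq : K = s * (1 + V) * d0 + s * lambda * K.
Proof. unfold K; field; lra. Qed.

Lemma d0_le_K : 0 <= d0 <= K.
Proof.
  assert (HV : 0 <= V) by apply pos_INR.
  assert (Hd0 : 0 <= d0) by apply rho_ge0.
  pose proof pbv_s_ge1.
  assert (HK : 0 <= K).
  { unfold K, Rdiv. apply Rmult_le_pos; [|left; apply Rinv_0_lt_compat; lra].
    apply Rmult_le_pos; [apply Rmult_le_pos|]; lra. }
  assert (0 <= (s * (1 + V) - 1) * d0) by (apply Rmult_le_pos; nra).
  assert (0 <= s * lambda * K) by (apply Rmult_le_pos; [apply Rmult_le_pos|]; lra).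
  rewrite K_fixed_eq. lra.
Qed.

Lemma picard_dist_bound k n : rho (x n) (x (n + k)%nat) <= K * lambda ^ n.
Proof.
  assert (HV : 0 <= V) by apply pos_INR.
  pose proof pbv_s_ge1; pose proof d0_le_K.
  revert n; induction k as [|k IH]; intro n.
  - rewrite Nat.add_0_r.
    pose proof (rho_self_le (x n) (x (S n))); pose proof (picard_step_pow n).
    pose proof (pow_le lambda n Hl). nra.
  - replace (n + S k)%nat with (S n + k)%nat by lia.
    pose proof (pow_le lambda n Hl) as Hpow.
    apply Rle_trans with (1 := rho_triangle_via (x n) (x (S n)) (x (S n + k)%nat)).
    apply Rle_trans with
      (s * (lambda ^ n * d0 + V * (lambda ^ n * d0) + K * lambda ^ S n)).
    + apply Rmult_le_compat_l; [lra|].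
      apply Rplus_le_compat; [apply Rplus_le_compat|].
      * apply picard_step_pow.
      * apply Rmult_le_compat_l; [exact HV|].
        apply Rle_trans with (2 := picard_step_pow n); apply rho_self_le_r.
      * apply IH.
    + right. rewrite K_fixed_eq at 2. simpl. ring.
Qed.

Lemma picard_double_lim0 : double_lim rho x 0.
Proof.
  assert (HK : 0 <= K) by (pose proof d0_le_K; lra).
  intros eps Heps.
  destruct (scaled_pow_eventually_lt lambda K (conj Hl lambda_lt1) HK eps Heps) as [N HN].
  exists N. intros n m Hn Hm.
  rewrite Rminus_0_r, Rabs_right by (apply Rle_ge, rho_ge0).
  destruct (Nat.le_ge_cases n m) as [Hnm|Hmn].
  - replace m with (n + (m - n))%nat by lia.
    apply Rle_lt_trans with (2 := HN n Hn); apply picard_dist_bound.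
  - rewrite rhoC. replace n with (m + (n - m))%nat by lia.
    apply Rle_lt_trans with (2 := HN m Hm); apply picard_dist_bound.
Qed.

Lemma picard_limit_fixed b : Un_cv (fun n => rho (x n) b) 0 -> f b = b.
Proof.
  intro Hconv. symmetry. apply eq_of_rho_eq0.
  assert (HV : 0 <= V) by apply pos_INR.
  pose proof pbv_s_ge1; pose proof (rho_ge0 b (f b)).
  set (t := rho b (f b)) in *.
  enough (Hscaled : (1 - s * lambda) * t <= 0).
  { assert (t <= 0) by (apply Rmult_le_reg_l with (1 - s * lambda); lra). lra. }
  apply (nonpos_of_le_mul_eps _ (s * (1 + V + lambda))); [apply Rmult_le_pos; lra|].
  intros e He.
  destruct (Hconv e He) as [N1 H1].
  destruct (scaled_pow_eventually_lt lambda d0 (conj Hl lambda_lt1)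
              (rho_ge0 x0 (f x0)) e He) as [N2 H2].
  set (n := max N1 N2).
  assert (Hclose : forall m, (m >= n)%nat -> rho (x m) b < e).
  { intros m Hm. specialize (H1 m ltac:(unfold n in *; lia)).
    unfold R_dist in H1. rewrite Rminus_0_r, Rabs_right in H1 by (apply Rle_ge, rho_ge0).
    exact H1. }
  assert (Hstep : rho (x n) (f (x n)) < e).
  { apply Rle_lt_trans with (1 := picard_step_pow n). rewrite Rmult_comm. apply H2; unfold n; lia. }
  assert (Himage : rho (x (S n)) (f b) <= lambda * (e + t)).
  { apply Rle_trans with (1 := Hf (x n) b). fold t. apply Rmult_le_compat_l; [exact Hl|].
    pose proof (Hclose n (le_n n)).
    apply Rmax_lub; [lra|]. apply Rmax_lub; lra. }
  pose proof (Hclose (S n) ltac:(lia)) as Hnext.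
  assert (Hself : V * rho (x (S n)) (x (S n)) <= V * e).
  { apply Rmult_le_compat_l; [exact HV|]. pose proof (rho_self_le (x (S n)) b). lra. }
  pose proof (rho_triangle_via b (x (S n)) (f b)) as Htri.
  rewrite (rhoC b (x (S n))) in Htri; fold V in Htri.
  assert (s * (rho (x (S n)) b + V * rho (x (S n)) (x (S n)) + rho (x (S n)) (f b))
          <= s * ((1 + V + lambda) * e + lambda * t))
    by (apply Rmult_le_compat_l; lra).
  unfold t in *. lra.
Qed.

End PartialBvMetric.

Theorem mainTheorem4 (E : Type) (v : nat) (s : R) (rho : E -> E -> R)
  (S : E -> E) (lambda : R) :
  inhabited E ->
  partial_bv_metric v s rho ->
  pcomplete rho ->
  0 <= lambda -> lambda < 1 / s ->
  (forall u w, rho (S u) (S w) <= lambda * Rmax (rho u w) (Rmax (rho u (S u)) (rho w (S w)))) ->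
  exists b : E, S b = b /\ rho b b = 0 /\ (forall c : E, S c = c -> c = b).
Proof.
  intros [x0] Hrho Hcomp Hl Hls Hcon.
  assert (Hsl : s * lambda < 1).
  { pose proof (pbv_s_ge1 E v s rho Hrho).
    apply Rmult_lt_compat_l with (r := s) in Hls; [|lra].
    replace (s * (1 / s)) with 1 in Hls by (field; lra). exact Hls. }
  pose proof (picard_double_lim0 E v s rho Hrho S lambda Hl Hsl Hcon x0) as Hcauchy.
  destruct (Hcomp _ (ex_intro _ 0 Hcauchy)) as [b [Hdl Hconv]].
  assert (Hbb : rho b b = 0) by exact (double_lim_unique rho _ _ _ Hdl Hcauchy).
  unfold pconverges in Hconv; rewrite Hbb in Hconv.
  assert (Hfix : S b = b)
    by exact (picard_limit_fixed E v s rho Hrho S lambda Hl Hsl Hcon x0 b Hconv).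
  exists b; split; [exact Hfix|]; split; [exact Hbb|].
  intros c Hc. exact (fixed_point_unique E v s rho Hrho S lambda Hl Hsl Hcon b c Hfix Hc).
Qed.
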